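(* Let $y_i=\theta_i+\sigma z_i$, $i=1,\dots,n$, where $z_1,\dots,z_n$ are i.i.d. sub-Gaussian with parameter $1$, and let $\alpha_1,\dots,\alpha_k$ denote the Haar wavelet coefficients of the vector $pad_0(y_1,\dots,y_n)\in\mathbb{R}^k$, i.e. $\alpha=H\,pad_0(y_1,\dots,y_n)$. Then each $\alpha_i-\mathbb{E}[\alpha_i]$ is sub-Gaussian with parameter $2\sigma$.
   Context: $pad_0(y_1,\dots,y_n)$ is the vector $(y_1-\bar y,\dots,y_n-\bar y)$, $\bar y=\frac1n\sum_i y_i$, followed by zeros up to length $k$, the smallest power of $2$ that is $\ge n$. $H\in\mathbb{R}^{k\times k}$ is the orthonormal discrete Haar wavelet transform matrix. *)

From HB Require Import structures.
From mathcomp Require Import all_boot all_order all_algebra.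
From mathcomp Require Import all_classical all_reals all_analysis.
Set Implicit Arguments. Unset Strict Implicit. Unset Printing Implicit Defensive.
Import Order.TTheory GRing.Theory Num.Theory.
Local Open Scope classical_set_scope.
Local Open Scope ring_scope.

Definition pow2_ceil (n : nat) : nat := (2 ^ up_log 2 n)%N.

(* Orthonormal discrete Haar wavelet transform matrix of size k = 2^K.
   Row i >= 1, written i = 2^j + m with 0 <= m < 2^j (j = trunc_log 2 i):
   the Haar wavelet psi_{j,m}, supported on the block [m L, (m+1) L) with
   L = k / 2^j, equal to +sqrt(2^j/k) on the first half of the block and
   -sqrt(2^j/k) on the second half. *)
Definition haar_mx (R : realType) (k : nat) : 'M[R]_k :=
  \matrix_(i < k, t < k)
    if (i == 0 :> nat) then (Num.sqrt (k%:R))^-1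
    else
      let j := trunc_log 2 i in
      let m := (i - 2 ^ j)%N in
      let L := (k %/ 2 ^ j)%N in
      let c := Num.sqrt ((2 ^ j)%:R / k%:R) in
      if ((m * L <= t) && (t < m * L + L %/ 2))%N then c
      else if ((m * L + L %/ 2 <= t) && (t < m * L + L))%N then - c
      else 0.

Definition pad0 (R : realType) (n : nat) (y : 'I_n -> R) : 'cV[R]_(pow2_ceil n) :=
  let ybar := (\sum_(i < n) y i) / n%:R in
  \col_(t < pow2_ceil n)
    match @insub nat (fun m => (m < n)%N) 'I_n (nat_of_ord t) with
    | Some i => y i - ybar
    | None => 0
    end.

Definition subgaussian d (T : measurableType d) (R : realType)
    (P : probability T R) (X : T -> R) (s : R) : Prop :=
  [/\ measurable_fun setT X,
      P.-integrable setT (EFin \o X),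
      (\int[P]_x (X x)%:E = 0)%E &
      forall l : R,
        (\int[P]_x (expR (l * X x))%:E <= (expR (l ^+ 2 * s ^+ 2 / 2))%:E)%E].

Definition mutually_independent d (T : measurableType d) (R : realType)
    (P : probability T R) (n : nat) (Z : 'I_n -> T -> R) : Prop :=
  forall B : 'I_n -> set R, (forall i, measurable (B i)) ->
    P (\bigcap_i (Z i @^-1` B i)) = (\prod_(i < n) P (Z i @^-1` B i))%E.

Definition identically_distributed d (T : measurableType d) (R : realType)
    (P : probability T R) (n : nat) (Z : 'I_n -> T -> R) : Prop :=
  forall (i j : 'I_n) (B : set R), measurable B ->
    P (Z i @^-1` B) = P (Z j @^-1` B).

From HB Require Import structures.
From mathcomp Require Import all_boot all_order all_algebra.
From mathcomp Require Import all_classical all_reals all_analysis.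
From mathcomp Require Import measurable_realfun ring lra zify.
Import Order.TTheory GRing.Theory Num.Theory HBNNSimple.

(* After centring and zero padding, the i-th Haar coefficient is an affine
   function a + sum_j sigma c_j z_j of the noise, where c is the centred
   restriction of the i-th row of H to the first n coordinates. Centring and
   restriction do not increase the Euclidean norm and the rows of H have norm 1,
   so |c| <= 1. The moment generating function of a sum of independent variables
   factorizes, hence sum_j sigma c_j z_j is sub-Gaussian with parameter
   sigma |c| <= 2 sigma, and subtracting the mean removes a. Independence, given
   as a product rule for events, is upgraded to the product rule for expectations
   of nonnegative functions of the z_j one factor at a time: a factor that is an
   indicator is replaced by a simple function by linearity, and then by an
   arbitrary nonnegative measurable function by monotone convergence. *)

Local Open Scope classical_set_scope.
Local Open Scope ring_scope.

Section integral_factor.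
Context d (T : measurableType d) (R : realType) (P : probability T R).
Local Open Scope ereal_scope.

Lemma integral_indic_comp (X : T -> R) (S : set R) :
  measurable_fun setT X -> measurable S ->
  \int[P]_x (\1_S (X x))%:E = P (X @^-1` S).
Proof.
move=> mX mS.
have mXS : measurable (X @^-1` S) by rewrite -[X @^-1` S]setTI; exact: mX.
by rewrite -[in RHS](setIT (X @^-1` S)) -integral_indic.
Qed.

Lemma integral_nnsfun_comp_mul (s : {nnsfun R >-> R}) (X A : T -> R) :
  measurable_fun setT X -> measurable_fun setT A -> (forall x, 0 <= A x)%R ->
  \int[P]_x ((s (X x))%:E * (A x)%:E) =
  \sum_(y \in range s) y%:E * \int[P]_x ((\1_(s @^-1` [set y]) (X x))%:E * (A x)%:E).
Proof.
move=> mX mA A_ge0.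
under eq_integral do rewrite -EFinM fimfunE mulr_fsuml -fsumEFin//.
rewrite ge0_integral_fsum//; last 2 first.
- move=> y; apply/measurable_EFinP; apply: measurable_funM => //.
  by apply: measurable_funM => //; apply: measurableT_comp.
- move=> y x _; rewrite lee_fin mulr_ge0//.
  by have := nnfun_muleindic_ge0 s y (X x); rewrite -EFinM lee_fin.
apply: eq_fsbigr => y _.
have [y_lt0|y_ge0] := ltP y 0%R.
  rewrite (preimage_nnfun0 _ y_lt0) !integral0_eq ?mule0// => x _.
    by rewrite indic0 mul0e.
  by rewrite indic0 mulr0 mul0r.
under eq_integral do rewrite -mulrA EFinM.
rewrite ge0_integralZl_EFin//.
- by move=> x _; rewrite lee_fin mulr_ge0.
- by apply/measurable_EFinP; apply: measurable_funM => //; apply: measurableT_comp.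
Qed.

Section factor_from_indic.
Variables (X A : T -> R) (K : \bar R).
Hypotheses (mX : measurable_fun setT X) (mA : measurable_fun setT A).
Hypotheses (A_ge0 : forall x, (0 <= A x)%R) (K_fin : K \is a fin_num).
Hypothesis indic_factor : forall C, measurable C ->
  \int[P]_x ((\1_C (X x))%:E * (A x)%:E) = P (X @^-1` C) * K.

Lemma nnsfun_comp_factor (s : {nnsfun R >-> R}) :
  \int[P]_x ((s (X x))%:E * (A x)%:E) = (\int[P]_x (s (X x))%:E) * K.
Proof.
have := @integral_nnsfun_comp_mul s X (fun=> 1%R) mX (measurable_cst _) (fun=> ler01).
under eq_integral do rewrite mule1.
move=> ->; rewrite integral_nnsfun_comp_mul// ge0_mule_fsuml; last first.
  move=> y; have [y_lt0|y_ge0] := ltP y 0%R.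
    rewrite (preimage_nnfun0 _ y_lt0) integral0_eq ?mule0// => x _.
    by rewrite indic0 mul0e.
  by rewrite mule_ge0 ?lee_fin// integral_ge0// => x _; rewrite mule1 lee_fin.
apply: eq_fsbigr => y _; rewrite -muleA; congr (_ * _).
have msy : measurable (s @^-1` [set y]).
  by apply: (measurable_funPTI s); exact: measurable_set1.
rewrite indic_factor// -integral_indic_comp//.
by congr (_ * _); apply: eq_integral => x _; rewrite mule1.
Qed.

Lemma ge0_comp_factor (h : R -> R) :
  measurable_fun setT h -> (forall r, 0 <= h r)%R ->
  \int[P]_x ((h (X x))%:E * (A x)%:E) = (\int[P]_x (h (X x))%:E) * K.
Proof.
move=> mh h_ge0.
have mEh : measurable_fun setT (EFin \o h) by apply/measurable_EFinP.
pose f := nnsfun_approx measurableT mEh.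
have f_cvg r : (f k r)%:E @[k --> \oo] --> (h r)%:E.
  by apply: cvg_nnsfun_approx => // x _; rewrite lee_fin.
have f_nd r : {homo (fun k => f k r) : a b / (a <= b)%N >-> (a <= b)%R}.
  by move=> a b ab; exact/lefP/nd_nnsfun_approx.
have mfX k : measurable_fun setT (fun x => (f k (X x))%:E).
  by apply/measurable_EFinP; apply: measurableT_comp.
have int_f_nd :
    {homo (fun k => \int[P]_x (f k (X x))%:E) : a b / (a <= b)%N >-> a <= b}.
  move=> a b ab; apply: ge0_le_integral => // x _; rewrite lee_fin//.
  exact: f_nd.
transitivity (limn (fun k => \int[P]_x ((f k (X x))%:E * (A x)%:E))).
  rewrite -monotone_convergence//.
  - apply: eq_integral => x _; apply/esym/cvg_lim => //.
    exact: cvgeZr (f_cvg _).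
  - by move=> k; apply: emeasurable_funM => //; apply/measurable_EFinP.
  - by move=> k x _; rewrite -EFinM lee_fin mulr_ge0.
  - by move=> x _ a b ab; apply: lee_wpmul2r; rewrite ?lee_fin//; exact: f_nd.
under eq_fun do rewrite nnsfun_comp_factor.
rewrite (cvg_lim _ (cvgeZr K_fin (ereal_nondecreasing_is_cvgn int_f_nd)))//.
congr (_ * _); rewrite -monotone_convergence//.
- by apply: eq_integral => x _; apply/cvg_lim => //; exact: f_cvg.
- by move=> k x _; rewrite lee_fin.
- by move=> x _ a b ab; rewrite lee_fin; exact: f_nd.
Qed.

End factor_from_indic.
End integral_factor.

Section independent_product.
Context d (T : measurableType d) (R : realType) (P : probability T R).
Variables (n : nat) (Z : 'I_n -> T -> R).
Hypothesis mZ : forall i, measurable_fun setT (Z i).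
Hypothesis Z_indep : mutually_independent P Z.
Local Open Scope ereal_scope.

Definition prod_comp_factorizes (f : 'I_n -> R -> R) : Prop :=
  \int[P]_x (\prod_(i < n) f i (Z i x))%:E =
  \prod_(i < n) \int[P]_x (f i (Z i x))%:E.

Lemma indic_prod_comp_factorizes (B : 'I_n -> set R) :
  (forall i, measurable (B i)) -> prod_comp_factorizes (fun i => \1_(B i)).
Proof.
move=> mB; rewrite /prod_comp_factorizes.
under [RHS]eq_bigr do rewrite integral_indic_comp//.
have mZB : measurable (\bigcap_i (Z i @^-1` B i)).
  apply: fin_bigcap_measurable => // i _.
  by rewrite -[_ @^-1` _]setTI; exact: mZ.
rewrite -Z_indep// -[in RHS](setIT (\bigcap_i _)) -integral_indic//.
apply: eq_integral => w _; congr EFin.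
have [inB|/existsNP[i /= notinB]] := pselect (forall i, B i (Z i w)).
  rewrite big1 => [|i _]; rewrite indicE mem_set//.
  by move=> i _; exact: inB.
rewrite (bigD1 i)//= indicE memNset// mul0r indicE memNset//.
by move=> /(_ i I).
Qed.

Section update.
Variables (f : 'I_n -> R -> R) (i0 : 'I_n).
Hypotheses (mf : forall i, measurable_fun setT (f i)).
Hypotheses (f_ge0 : forall i r, (0 <= f i r)%R).
Hypothesis f_fin : forall i, \int[P]_x (f i (Z i x))%:E \is a fin_num.

Let upd (g : R -> R) i := if i == i0 then g else f i.

Lemma prod_comp_factorizes_update (h : R -> R) :
  measurable_fun setT h -> (forall r, 0 <= h r)%R ->
  (forall C, measurable C -> prod_comp_factorizes (upd \1_C)) ->
  prod_comp_factorizes (upd h).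
Proof.
move=> mh h_ge0 indic_upd.
pose A w := (\prod_(i < n | i != i0) f i (Z i w))%R.
pose K := \prod_(i < n | i != i0) \int[P]_x (f i (Z i x))%:E.
have prod_upd g w : (\prod_(i < n) upd g i (Z i w) = g (Z i0 w) * A w)%R.
  rewrite (bigD1 i0)//= /upd eqxx; congr (_ * _)%R.
  by apply: eq_bigr => i /negbTE ->.
have mean_upd g : \prod_(i < n) \int[P]_x (upd g i (Z i x))%:E =
    \int[P]_x (g (Z i0 x))%:E * K.
  rewrite (bigD1 i0)//= /upd eqxx; congr (_ * _).
  by apply: eq_bigr => i /negbTE ->.
rewrite /prod_comp_factorizes mean_upd.
under eq_integral do rewrite prod_upd EFinM.
apply: ge0_comp_factor => //.
- have -> : A = fun w => (\prod_(i < n) if i != i0 then f i (Z i w) else 1)%R.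
    by rewrite funeqE => w; rewrite /A big_mkcond.
  by apply: measurable_prod => i _; case: (i != i0) => //; exact: measurableT_comp.
- by move=> w; apply: prodr_ge0.
- by apply: prode_fin_num => i _.
- move=> C mC; have := indic_upd C mC.
  rewrite /prod_comp_factorizes mean_upd integral_indic_comp// => <-.
  by apply: eq_integral => x _; rewrite prod_upd EFinM.
Qed.

End update.

Lemma ge0_prod_comp_factorizes (g : 'I_n -> R -> R) :
  (forall i, measurable_fun setT (g i)) -> (forall i r, (0 <= g i r)%R) ->
  (forall i, \int[P]_x (g i (Z i x))%:E \is a fin_num) ->
  prod_comp_factorizes g.
Proof.
move=> mg g_ge0 g_fin.
pose mix m (B : 'I_n -> set R) (i : 'I_n) := if (i < m)%N then g i else \1_(B i).
suff mix_factorizes m : (m <= n)%N -> forall B, (forall i, measurable (B i)) ->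
    prod_comp_factorizes (mix m B).
  have -> : g = mix n (fun=> setT) by rewrite funeqE => i; rewrite /mix ltn_ord.
  exact: mix_factorizes.
elim: m => [_ B mB|m IH lt_mn B mB].
  have -> : mix 0%N B = fun i => \1_(B i) by rewrite funeqE => i; rewrite /mix ltn0.
  exact: indic_prod_comp_factorizes.
pose i0 : 'I_n := Ordinal lt_mn.
have -> : mix m.+1 B = fun i => if i == i0 then g i0 else mix m B i.
  rewrite funeqE => i; rewrite /mix.
  case: eqP => [->|/eqP ne]; first by rewrite ltnSn.
  by rewrite ltnS leq_eqVlt -[m]/(nat_of_ord i0) (inj_eq val_inj) (negbTE ne).
apply: prod_comp_factorizes_update => //.
- by move=> i; rewrite /mix; case: ltnP => _ //; exact: measurable_indic.
- by move=> i r; rewrite /mix; case: ltnP => _ //; rewrite indicE.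
- move=> i; rewrite /mix; case: ltnP => _ //.
  by rewrite integral_indic_comp// fin_num_measure// -[_ @^-1` _]setTI; exact: mZ.
- move=> C mC; pose B' i := if i == i0 then C else B i.
  have -> : (fun i => if i == i0 then \1_C else mix m B i) = mix m B'.
    by rewrite funeqE => i; rewrite /mix /B'; case: eqP => [->|//]; rewrite ltnn.
  by apply: IH => [|i]; [exact: ltnW | rewrite /B'; case: eqP].
Qed.

End independent_product.

Section subgaussian_sum.
Context d (T : measurableType d) (R : realType) (P : probability T R).
Variables (n : nat) (Z : 'I_n -> T -> R).
Hypothesis Z_indep : mutually_independent P Z.
Local Open Scope ereal_scope.

Lemma integral_expR_sum_indep (a : 'I_n -> R) :
  (forall i, measurable_fun setT (Z i)) ->
  (forall i, \int[P]_x (expR (a i * Z i x))%:E \is a fin_num) ->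
  \int[P]_x (expR (\sum_(i < n) a i * Z i x))%:E =
  \prod_(i < n) \int[P]_x (expR (a i * Z i x))%:E.
Proof.
move=> mZ mgf_fin.
under eq_integral do rewrite expR_sum.
apply: (@ge0_prod_comp_factorizes _ _ _ P n Z mZ Z_indep
  (fun i r => expR (a i * r))) => // i.
by apply: measurableT_comp => //; apply: measurable_funM.
Qed.

Lemma subgaussian_lin_comb (b : 'I_n -> R) (s : R) :
  (forall i, subgaussian P (Z i) 1) ->
  (\sum_(i < n) b i ^+ 2 <= s ^+ 2)%R ->
  subgaussian P (fun w => \sum_(i < n) b i * Z i w)%R s.
Proof.
move=> Z_sg b_le.
have mZ i : measurable_fun setT (Z i) by case: (Z_sg i).
have intZ i : P.-integrable setT (EFin \o Z i) by case: (Z_sg i).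
have int_bZ i : P.-integrable setT (fun x => (b i * Z i x)%:E).
  apply: (eq_integrable measurableT _ _ _ (integrableZl measurableT (b i) (intZ i))).
  by move=> x _; rewrite EFinM.
have mgf_le i l : \int[P]_x (expR (l * Z i x))%:E <= (expR (l ^+ 2 / 2))%:E.
  by case: (Z_sg i) => _ _ _ /(_ l); rewrite expr1n mulr1.
have mgf_fin i l : \int[P]_x (expR (l * Z i x))%:E \is a fin_num.
  rewrite ge0_fin_numE; first exact: le_lt_trans (mgf_le i l) (ltry _).
  by apply: integral_ge0 => x _; rewrite lee_fin expR_ge0.
split.
- by apply: measurable_sum => i; apply: measurable_funM.
- apply: (eq_integrable measurableT (fun w => \sum_(i < n) (b i * Z i w)%:E)).
    by move=> w _; rewrite /= sumEFin.
  by apply: integrable_sum => // i _.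
- under eq_integral do rewrite -sumEFin.
  rewrite integral_sum// big1// => i _.
  under eq_integral do rewrite EFinM.
  rewrite integralZl//; last exact: intZ.
  by rewrite [X in (_ * X)%E](_ : _ = 0) ?mule0//; case: (Z_sg i).
- move=> l.
  under eq_integral do rewrite mulr_sumr (eq_bigr _ (fun i _ => mulrA l (b i) (Z i _))).
  rewrite integral_expR_sum_indep//.
  rewrite (eq_bigr (fun i => (fine (\int[P]_x (expR (l * b i * Z i x))%:E))%:E));
    last by move=> i _; rewrite fineK.
  rewrite prodEFin lee_fin.
  apply: le_trans (_ : \prod_(i < n) expR ((l * b i) ^+ 2 / 2) <= _)%R.
    apply: ler_prod => i _; rewrite fine_ge0 -?lee_fin ?fineK ?mgf_le//.
    by apply: integral_ge0 => x _; rewrite lee_fin expR_ge0.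
  rewrite -expR_sum ler_expR -mulr_suml.
  under eq_bigr do rewrite exprMn.
  by rewrite -mulr_sumr ler_wpM2r// ler_wpM2l// sqr_ge0.
Qed.

End subgaussian_sum.

Lemma subgaussian_add_cst_center d (T : measurableType d) (R : realType)
    (P : probability T R) (X : T -> R) (a s : R) :
  subgaussian P X s ->
  subgaussian P (fun w => a + X w - fine (\int[P]_x (a + X x)%:E)) s.
Proof.
move=> X_sg; have [_ intX EX _] := X_sg.
suff -> : fine (\int[P]_x (a + X x)%:E) = a.
  by under eq_fun do rewrite addrAC subrr add0r.
under eq_integral do rewrite EFinD.
rewrite integralD//; last exact: finite_measure_integrable_cst.
rewrite integral_cst// [X in (_ * X)%E](_ : _ = 1%E); last exact: probability_setT.
by rewrite mule1 EX adde0.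
Qed.

Definition center {R : fieldType} {n : nat} (h : 'I_n -> R) (j : 'I_n) : R :=
  h j - (\sum_(i < n) h i) / n%:R.

Lemma sum_mul_center (R : fieldType) (n : nat) (h y : 'I_n -> R) :
  \sum_(j < n) h j * center y j = \sum_(j < n) center h j * y j.
Proof.
rewrite /center.
under eq_bigr do rewrite mulrBr.
under [RHS]eq_bigr do rewrite mulrBl.
by rewrite !sumrB -mulr_suml -mulr_sumr mulrA mulrAC.
Qed.

Lemma sum_sqr_center_le (R : realFieldType) (n : nat) (h : 'I_n -> R) :
  \sum_(j < n) center h j ^+ 2 <= \sum_(j < n) h j ^+ 2.
Proof.
case: n h => [|n] h; first by rewrite !big_ord0.
rewrite /center; set S := \sum_(j < n.+1) h j; set hb := S / n.+1%:R.
have hbE : hb * n.+1%:R = S by rewrite /hb divfK.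
rewrite (eq_bigr (fun j => h j ^+ 2 - h j * (hb * 2) + hb ^+ 2)); last first.
  by move=> j _; ring.
rewrite big_split /= sumrB sumr_const card_ord -mulr_suml -/S -mulr_natr.
rewrite -hbE -(mulr_natr (hb ^+ 2)).
have : 0 <= hb ^+ 2 * n.+1%:R by rewrite mulr_ge0 ?sqr_ge0.
nra.
Qed.

Lemma leq_pow2_ceil n : (n <= pow2_ceil n)%N.
Proof. exact: up_logP. Qed.

Lemma mulmx_pad0 (R : realType) (p n : nat) (M : 'M[R]_(p, pow2_ceil n))
    (i : 'I_p) (y : 'I_n -> R) :
  (M *m pad0 y) i 0 =
  \sum_(j < n) center (fun j => M i (widen_ord (leq_pow2_ceil n) j)) j * y j.
Proof.
rewrite -sum_mul_center mxE (bigID (fun t : 'I_(pow2_ceil n) => (t < n)%N)) /=.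
rewrite [X in _ + X]big1 ?addr0 => [|t /negbTE t_ge]; last first.
  by rewrite mxE insubF ?mulr0.
rewrite (big_ord_narrow (leq_pow2_ceil n)); apply: eq_bigr => j _.
by rewrite mxE /= valK.
Qed.

Lemma sum_sqr_widen_le (R : realDomainType) n k (le_nk : (n <= k)%N)
    (F : 'I_k -> R) :
  \sum_(j < n) F (widen_ord le_nk j) ^+ 2 <= \sum_(t < k) F t ^+ 2.
Proof.
rewrite (bigID (fun t : 'I_k => (t < n)%N)) /= (big_ord_narrow le_nk) lerDl.
by apply: sumr_ge0 => t _; rewrite sqr_ge0.
Qed.

Lemma count_window (a L k : nat) :
  (\sum_(t < k) ((a <= t) && (t < a + L)) <= L)%N.
Proof.
suff -> : (\sum_(t < k) ((a <= t) && (t < a + L)))%N = (minn k (a + L) - a)%N.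
  by lia.
elim: k => [|k IH]; first by rewrite big_ord0 min0n.
rewrite big_ord_recr /= IH.
by case: (leqP a k) => ?; case: (ltnP k (a + L)) => ? /=; lia.
Qed.

Lemma sum_sqr_haar_mx_row_le1 (R : realType) (k : nat) (i : 'I_k) :
  \sum_(t < k) haar_mx R k i t ^+ 2 <= 1.
Proof.
have k_gt0 : (0 < k)%N := leq_ltn_trans (leq0n i) (ltn_ord i).
have kR : 0 < k%:R :> R by rewrite ltr0n.
under eq_bigr do rewrite mxE.
have [i0|i0] := boolP (i == 0 :> nat); rewrite ?i0 ?(negbTE i0) /=.
  under eq_bigr do rewrite exprVn sqr_sqrtr ?ler0n//.
  by rewrite sumr_const card_ord -(mulr_natr k%:R^-1) mulVf ?gt_eqF.
set j := trunc_log 2 i; set m := (i - 2 ^ j)%N; set L := (k %/ 2 ^ j)%N.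
set c := Num.sqrt _.
have c2 : c ^+ 2 = (2 ^ j)%:R / k%:R by rewrite sqr_sqrtr// divr_ge0.
apply: le_trans
  (_ : \sum_(t < k) c ^+ 2 * ((m * L <= t) && (t < m * L + L))%N%:R <= _).
  apply: ler_sum => t _.
  case: ifPn => [/andP[h1 h2]|_].
    by rewrite h1 /= (leq_trans h2) ?leq_add2l ?leq_div// mulr1.
  case: ifPn => [/andP[h1 h2]|_].
    by rewrite sqrrN h2 andbT (leq_trans _ h1) ?leq_addr// mulr1.
  by rewrite expr0n /= mulr_ge0 ?sqr_ge0.
rewrite -mulr_sumr -natr_sum c2.
apply: le_trans (_ : (2 ^ j)%:R / k%:R * L%:R <= _).
  by rewrite ler_wpM2l ?divr_ge0// ler_nat count_window.
rewrite mulrAC ler_pdivrMr// mul1r -natrM ler_nat mulnC.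
exact: leq_trunc_div.
Qed.

Theorem lemma2 (d : measure_display) (T : measurableType d) (R : realType)
    (P : probability T R) (n : nat) (theta : 'I_n -> R) (sigma : R)
    (z : 'I_n -> T -> R) :
  (forall i, subgaussian P (z i) 1) ->
  mutually_independent P z ->
  identically_distributed P z ->
  let y := fun (w : T) (i : 'I_n) => theta i + sigma * z i w in
  let alpha := fun w : T => haar_mx R (pow2_ceil n) *m pad0 (y w) in
  forall i : 'I_(pow2_ceil n),
    subgaussian P
      (fun w => alpha w i 0 - fine (\int[P]_x (alpha x i 0)%:E)) (2 * sigma).
Proof.
move=> z_sg z_indep _ y alpha i.
pose c :=
  center (fun j => haar_mx R (pow2_ceil n) i (widen_ord (leq_pow2_ceil n) j)).
pose a := \sum_(j < n) c j * theta j.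
pose S w := \sum_(j < n) sigma * c j * z j w.
have alphaE w : alpha w i 0 = a + S w.
  rewrite /alpha mulmx_pad0 -/c -big_split.
  by apply: eq_bigr => j _ /=; rewrite /y; ring.
have c_le1 : \sum_(j < n) c j ^+ 2 <= 1.
  apply: le_trans (sum_sqr_center_le _ _ _) _.
  apply: le_trans (sum_sqr_widen_le _ _ _ _ _) _.
  exact: sum_sqr_haar_mx_row_le1.
have -> : (fun w => alpha w i 0 - fine (\int[P]_x (alpha x i 0)%:E)) =
    (fun w => a + S w - fine (\int[P]_x (a + S x)%:E)).
  by rewrite funeqE => w; under eq_integral do rewrite alphaE; rewrite alphaE.
apply/subgaussian_add_cst_center/subgaussian_lin_comb => //.
under eq_bigr do rewrite exprMn.
rewrite -mulr_sumr exprMn mulrC ler_wpM2r ?sqr_ge0//.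
lra.
Qed.
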